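(* Let $\tau\in(0,1)$, $\lambda>0$, and let $P_{\lambda,\gamma}$ be either the MCP penalty (with $\gamma\ge 1$) or the SCAD penalty (with $\gamma\ge 2$). For $\sigma\ge 0$, $\mu>0$ and $\mathbf{w},\mathbf{w}'\in\mathbb{R}^{P+1}$ define $$\Phi_\sigma(\mathbf{w},\mathbf{w}',\mu)=\sum_{l=1}^{L}\tilde g_l(\mathbf{w}',\mu)+n\,P_{\lambda,\gamma}(\mathbf{w})+\sigma\|\mathbf{w}-\mathbf{w}'\|_2^2 .$$ Then $\Phi_\sigma$ is bounded from below on $\mathbb{R}^{P+1}\times\mathbb{R}^{P+1}\times(0,\infty)$.
   Context: There are $L$ clients. Client $l$ holds responses $\mathbf{y}^{(l)}=(y^{(l)}_1,\dots,y^{(l)}_{M_l})^\top\in\mathbb{R}^{M_l}$ and augmented feature vectors $\bar{\mathbf{x}}^{(l)}_i=[(\mathbf{x}^{(l)}_i)^\top,1]^\top\in\mathbb{R}^{P+1}$, $i=1,\dots,M_l$; $n=\sum_{l=1}^L M_l$. The smoothing function is $f(r,\mu)=|r|$ if $|r|\ge\mu$ and $f(r,\mu)=\frac{r^2}{2\mu}+\frac{\mu}{2}$ if $|r|<\mu$. The smoothed local loss is $\tilde g_l(\mathbf{w},\mu)=\frac12\sum_{i=1}^{M_l} f\big(y^{(l)}_i-(\bar{\mathbf{x}}^{(l)}_i)^\top\mathbf{w},\mu\big)+(\tau-\tfrac12)\sum_{i=1}^{M_l}\big(y^{(l)}_i-(\bar{\mathbf{x}}^{(l)}_i)^\top\mathbf{w}\big)$.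 The penalty is $P_{\lambda,\gamma}(\mathbf{w})=\sum_{p=1}^{P}g_{\lambda,\gamma}(w_p)$ (the last, intercept coordinate $w_{P+1}$ is not penalized), where for MCP $g_{\lambda,\gamma}(t)=\lambda|t|-\frac{t^2}{2\gamma}$ if $|t|\le\gamma\lambda$ and $=\frac{\gamma\lambda^2}{2}$ otherwise; for SCAD $g_{\lambda,\gamma}(t)=\lambda|t|$ if $|t|\le\lambda$, $=-\frac{t^2-2\gamma\lambda|t|+\lambda^2}{2(\gamma-1)}$ if $\lambda<|t|\le\gamma\lambda$, and $=\frac{(\gamma+1)\lambda^2}{2}$ if $|t|>\gamma\lambda$. *)

From HB Require Import structures.
From mathcomp Require Import all_boot all_order all_algebra.
Set Implicit Arguments. Unset Strict Implicit. Unset Printing Implicit Defensive.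
Import Order.TTheory GRing.Theory Num.Theory.
Local Open Scope ring_scope.

Definition fsmooth {R : realFieldType} (r mu : R) : R :=
  if mu <= `|r| then `|r| else r ^+ 2 / (2 * mu) + mu / 2.

(* augmented feature vector  xbar = [x^T, 1]^T, indices 0..P-1 then P *)
Definition xaug {R : realFieldType} {P : nat} (x : 'I_P -> R) : 'I_P.+1 -> R :=
  fun j => match unlift ord_max j with Some k => x k | None => 1 end.

Definition dotP {R : realFieldType} {P : nat} (a b : 'I_P.+1 -> R) : R :=
  \sum_(j < P.+1) a j * b j.

Definition gtilde {R : realFieldType} {P M : nat} (tau : R)
  (y : 'I_M -> R) (x : 'I_M -> 'I_P -> R) (w : 'I_P.+1 -> R) (mu : R) : R :=
  2^-1 * \sum_(i < M) fsmooth (y i - dotP (xaug (x i)) w) mu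
  + (tau - 2^-1) * \sum_(i < M) (y i - dotP (xaug (x i)) w).

Inductive penalty_kind := MCP | SCAD.

Definition g_mcp {R : realFieldType} (lam gam t : R) : R :=
  if `|t| <= gam * lam then lam * `|t| - t ^+ 2 / (2 * gam)
  else gam * lam ^+ 2 / 2.

Definition g_scad {R : realFieldType} (lam gam t : R) : R :=
  if `|t| <= lam then lam * `|t|
  else if `|t| <= gam * lam then
    - (t ^+ 2 - 2 * gam * lam * `|t| + lam ^+ 2) / (2 * (gam - 1))
  else (gam + 1) * lam ^+ 2 / 2.

Definition gpen {R : realFieldType} (k : penalty_kind) (lam gam t : R) : R :=
  match k with MCP => g_mcp lam gam t | SCAD => g_scad lam gam t end.

(* P_{lam,gam}(w) = sum over the first P coordinates; intercept w_{P+1} not penalized *)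
Definition penalty {R : realFieldType} {P : nat} (k : penalty_kind) (lam gam : R)
  (w : 'I_P.+1 -> R) : R :=
  \sum_(p < P) gpen k lam gam (w (widen_ord (leqnSn P) p)).

Definition Phi {R : realFieldType} {P L : nat} (M : 'I_L -> nat)
  (y : forall l : 'I_L, 'I_(M l) -> R) (x : forall l : 'I_L, 'I_(M l) -> 'I_P -> R)
  (tau : R) (k : penalty_kind) (lam gam sigma : R)
  (w w' : 'I_P.+1 -> R) (mu : R) : R :=
  \sum_(l < L) gtilde tau (y l) (x l) w' mu
  + (\sum_(l < L) M l)%:R * penalty k lam gam w
  + sigma * \sum_(j < P.+1) (w j - w' j) ^+ 2.

(** Every summand of [Phi] is nonnegative: the smoothing [fsmooth r mu]
    dominates [|r|], so each smoothed check-loss term is at least the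
    pinball loss [|r|/2 + (tau - 1/2) r >= 0]; MCP and SCAD are nonnegative
    penalties; and the proximal term is a sum of squares. *)

From HB Require Import structures.
From mathcomp Require Import all_boot all_order all_algebra.
From mathcomp Require Import ring lra.
Import Order.TTheory GRing.Theory Num.Theory.
Local Open Scope ring_scope.

Section NonnegativeTerms.

Variable R : realFieldType.
Implicit Types (r t mu tau lam gam : R).

(* No sign condition on [mu]: the quadratic branch is taken only when [|r| < mu]. *)
Lemma norm_le_fsmooth r mu : `|r| <= fsmooth r mu.
Proof.
rewrite /fsmooth; case: (lerP mu `|r|) => // lt_r_mu.
have mu_gt0 : 0 < mu := le_lt_trans (normr_ge0 r) lt_r_mu.
have -> : r ^+ 2 / (2 * mu) + mu / 2 = `|r| + (`|r| - mu) ^+ 2 / (2 * mu).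
  by rewrite -[r ^+ 2](real_normK (num_real r)); field; lra.
by rewrite lerDl divr_ge0 ?sqr_ge0 //; lra.
Qed.

Lemma smoothed_check_loss_ge0 tau r mu : 0 <= tau <= 1 ->
  0 <= 2^-1 * fsmooth r mu + (tau - 2^-1) * r.
Proof.
case/andP=> tau_ge0 tau_le1; have := norm_le_fsmooth r mu.
by case: (lerP 0 r) => [r_ge0 | r_lt0];
  [rewrite ger0_norm | rewrite ltr0_norm]; nra.
Qed.

Lemma g_mcp_ge0 lam gam t : 0 <= lam -> 0 < gam -> 0 <= g_mcp lam gam t.
Proof.
move=> lam_ge0 gam_gt0; rewrite /g_mcp; case: ifP => [t_small | _]; last first.
  by apply: divr_ge0; nra.
have t_ge0 := normr_ge0 t.
have -> : lam * `|t| - t ^+ 2 / (2 * gam) = `|t| * (lam - `|t| / (2 * gam)).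
  by rewrite -[t ^+ 2](real_normK (num_real t)); field; lra.
have : `|t| / (2 * gam) <= lam / 2.
  by rewrite ler_pdivrMr; lra.
nra.
Qed.

Lemma g_scad_ge0 lam gam t : 0 <= lam -> 1 < gam -> 0 <= g_scad lam gam t.
Proof.
move=> lam_ge0 gam_gt1; have t_ge0 := normr_ge0 t.
rewrite /g_scad; case: (lerP `|t| lam) => [_ | lam_lt_t]; first nra.
case: ifP => [t_le | _]; last by apply: divr_ge0; nra.
(* [|t| (2 gam lam - |t|) >= gam lam |t| > gam lam^2 >= lam^2] on [lam < |t| <= gam lam]. *)
rewrite -(real_normK (num_real t)) -mulNr divr_ge0 //; nra.
Qed.

Lemma gpen_ge0 k lam gam t : 0 < lam ->
  (match k with MCP => 1 <= gam | SCAD => 2 <= gam end) ->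
  0 <= gpen k lam gam t.
Proof.
move=> lam_gt0; case: k => /= gam_ge.
- by apply: g_mcp_ge0; lra.
- by apply: g_scad_ge0; lra.
Qed.

Lemma gtilde_ge0 (P M : nat) tau (y : 'I_M -> R) (x : 'I_M -> 'I_P -> R)
    (w : 'I_P.+1 -> R) mu :
  0 <= tau <= 1 -> 0 <= gtilde tau y x w mu.
Proof.
move=> tau01; rewrite /gtilde !mulr_sumr -big_split /=.
by apply: sumr_ge0 => i _; apply: smoothed_check_loss_ge0.
Qed.

End NonnegativeTerms.

Theorem lemma1 (R : realFieldType) (P L : nat) (M : 'I_L -> nat)
  (y : forall l : 'I_L, 'I_(M l) -> R) (x : forall l : 'I_L, 'I_(M l) -> 'I_P -> R)
  (tau lam gam sigma : R) (k : penalty_kind) :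
  0 < tau -> tau < 1 -> 0 < lam ->
  (match k with MCP => 1 <= gam | SCAD => 2 <= gam end) ->
  0 <= sigma ->
  exists B : R, forall (w w' : 'I_P.+1 -> R) (mu : R), 0 < mu ->
    B <= @Phi R P L M y x tau k lam gam sigma w w' mu.
Proof.
move=> tau_gt0 tau_lt1 lam_gt0 gam_ge sigma_ge0.
have tau01 : 0 <= tau <= 1 by apply/andP; split; lra.
exists 0 => w w' mu _; rewrite /Phi.
have loss_ge0 : 0 <= \sum_(l < L) gtilde tau (y l) (x l) w' mu.
  by apply: sumr_ge0 => l _; apply: gtilde_ge0.
have pen_ge0 : 0 <= penalty k lam gam w.
  by apply: sumr_ge0 => p _; apply: gpen_ge0.
have prox_ge0 : 0 <= \sum_(j < P.+1) (w j - w' j) ^+ 2.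
  by apply: sumr_ge0 => j _; apply: sqr_ge0.
by rewrite !addr_ge0 ?mulr_ge0 ?ler0n.
Qed.
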